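(* Let $T>0$. For each $p\ge1$ and $q\ge1$ there exists a constant $C_{p,q,T}>0$ (independent of $N$ and $s$) such that $$\mathbb E\bigl[(\widetilde Z^N(s))^p\bigr]\le C_{p,q,T}\,N^{-q/2}\qquad\text{for all } s\in[0,T],\ N\in\mathbb N.$$
   Context: Model. Fix $\tau>0$, $\mu\ge 0$, $N\in\mathbb N$, and write $L=\lfloor \tau N\rfloor$. The state space is $\Omega_N=[0,\infty)^{L+1}$, with elements $x=(x_{-L},\dots,x_0)$. Define $\theta_N^\pm:\Omega_N\to\Omega_N$ by $(\theta_N^\pm x)_j=x_{j+1}$ for $-L\le j<0$, $(\theta_N^+x)_0=x_0(1+\frac1N)$, $(\theta_N^-x)_0=\max\{x_0(1-\frac{x_{-L}}{N^2}),0\}$. Let $\xi^N=(\xi^N(n))_{n\ge0}$ be the discrete-time Markov chain on $\Omega_N$ moving from $x$ to $\theta_N^+x$ or $\theta_N^-x$ with probability $1/2$ each, with $\xi^N_j(0)=\mu N$ for all $j$. Let $(\sigma_n)_{n\ge1}$ be i.i.d. Exp(1), independent of $\xi^N$, $J_0=0$, $J_n=\sigma_1+\dots+\sigma_n$, and $X^N(t)=\xi^N(n)$ for $t\in[J_n,J_{n+1})$. Define $Z^N(t)=X^N_{-L}(Nt)/N$ for $t\ge0$ and $\widetilde Z^N(t)=Z^N(t)-\min\{Z^N(t),N\}$. *)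

From Stdlib Require Import Reals Lra Lia List ZArith.
From Coquelicot Require Import Coquelicot.
Open Scope R_scope.

(* State x = (x_{-L},...,x_0) is encoded as a function k : nat -> R with
   x k = x_{k-L} for 0 <= k <= L (so x 0 = x_{-L}, x L = x_0);
   coordinates k > L are unused (kept at their initial value). *)
Definition state := nat -> R.

Definition Lof (tau : R) (N : nat) : nat := Z.to_nat (Int_part (tau * INR N)).

Definition theta_plus (L N : nat) (x : state) : state :=
  fun k => if (k <? L)%nat then x (S k)
           else if (k =? L)%nat then x L * (1 + / INR N)
           else x k.

Definition theta_minus (L N : nat) (x : state) : state :=
  fun k => if (k <? L)%nat then x (S k)
           else if (k =? L)%nat then Rmax (x L * (1 - x O / (INR N ^ 2))) 0
           else x k.

Definition xi0 (mu : R) (N : nat) : state := fun _ => mu * INR N.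

(* the embedded chain after the sequence of coin flips bs
   (true = move by theta^+, false = move by theta^-) *)
Definition xi_path (L N : nat) (mu : R) (bs : list bool) : state :=
  fold_left (fun x (b : bool) => if b then theta_plus L N x else theta_minus L N x)
            bs (xi0 mu N).

Fixpoint all_bits (n : nat) : list (list bool) :=
  match n with
  | O => nil :: nil
  | S m => map (cons true) (all_bits m) ++ map (cons false) (all_bits m)
  end.

Definition E_xi (L N : nat) (mu : R) (n : nat) (f : state -> R) : R :=
  fold_right Rplus 0 (map (fun bs => f (xi_path L N mu bs)) (all_bits n)) / 2 ^ n.

Definition poisson_w (t : R) (n : nat) : R := exp (- t) * t ^ n / INR (fact n).

(* E[f(X^N(t))] for f >= 0, as an extended real (value in [0, +oo]):
   X^N(t) = xi^N(K_t), K_t ~ Poisson(t) independent of xi^N. *)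
Definition E_X (L N : nat) (mu t : R) (f : state -> R) : Rbar :=
  Lim_seq (fun M => sum_f_R0 (fun n => poisson_w t n * E_xi L N mu n f) M).

(* real power x^p for x >= 0, with 0^p = 0 (p >= 1) *)
Definition rpow (x p : R) : R := if Rlt_dec 0 x then Rpower x p else 0.

Definition Ztilde_of (N : nat) (z : R) : R := z - Rmin z (INR N).

(* E[(tilde Z^N(s))^p], where Z^N(s) = X^N_{-L}(N s) / N *)
Definition E_Ztilde_pow (tau mu : R) (N : nat) (s p : R) : Rbar :=
  E_X (Lof tau N) N mu (INR N * s)
      (fun x => rpow (Ztilde_of N (x O / INR N)) p).

From Stdlib Require Import Reals Lra Lia List.
From Coquelicot Require Import Coquelicot.
Open Scope R_scope.

(* A step of the chain multiplies the largest coordinate by at most 1 + 1/N,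
   so after n steps Z <= (mu + 1) e^(n/N) deterministically.  On the event
   Z~ > 0 we have Z > N, hence Z~^p <= Z^(p + q/2) N^(-q/2).  Averaging
   N^(-q/2) (mu + 1)^a e^(a n / N), with a = p + q/2, over the Poisson(N s)
   number n of jumps gives N^(-q/2) (mu + 1)^a exp(N s (e^(a/N) - 1)), and
   N s (e^(a/N) - 1) <= T a e^a uniformly in N and s. *)

Lemma exp_le_compat x y : x <= y -> exp x <= exp y.
Proof. intros [Hlt | ->]; [now apply Rlt_le, exp_increasing | apply Rle_refl]. Qed.

Lemma exp_pow_INR x n : exp x ^ n = exp (INR n * x).
Proof.
  induction n as [|n IH]; [now rewrite Rmult_0_l, exp_0|].
  rewrite S_INR, <- tech_pow_Rmult, IH, <- exp_plus. f_equal. ring.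
Qed.

Lemma Rpower_gt0 x y : 0 < Rpower x y.
Proof. apply exp_pos. Qed.

Lemma Rpower_exp x y : Rpower (exp x) y = exp (y * x).
Proof. unfold Rpower. now rewrite ln_exp. Qed.

Lemma pow_1_plus_le_exp x n : 0 <= 1 + x -> (1 + x) ^ n <= exp (INR n * x).
Proof.
  intros Hx. rewrite <- exp_pow_INR. apply pow_incr. split; [exact Hx|].
  apply exp_ineq1_le.
Qed.

Lemma exp_sub1_le x : 0 <= x -> exp x - 1 <= x * exp x.
Proof.
  intros Hx. pose proof (exp_pos x) as Hpos.
  assert (H : (1 - x) * exp x <= 1).
  { replace 1 with (exp (- x) * exp x) at 2
      by (rewrite exp_Ropp; field; lra).
    apply Rmult_le_compat_r; [lra|]. pose proof (exp_ineq1_le (- x)). lra. }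
  lra.
Qed.

Definition theta (L N : nat) (b : bool) (x : state) : state :=
  if b then theta_plus L N x else theta_minus L N x.

Lemma theta_bounded (L N : nat) (b : bool) (x : state) (c : R) :
  0 < INR N -> (forall k, 0 <= x k <= c) ->
  forall k, 0 <= theta L N b x k <= c * (1 + / INR N).
Proof.
  intros HN Hx k.
  assert (HinvN : 0 < / INR N) by now apply Rinv_0_lt_compat.
  assert (Hc : c <= c * (1 + / INR N)) by (specialize (Hx k); nra).
  destruct b; unfold theta, theta_plus, theta_minus;
    destruct (k <? L)%nat; try (specialize (Hx (S k)); lra);
    destruct (k =? L)%nat; try (specialize (Hx k); lra).
  - specialize (Hx L). split; nra.
  - pose proof (Hx L). pose proof (Hx O).
    assert (0 <= x O / INR N ^ 2).
    { apply Rmult_le_pos; [lra|]. apply Rlt_le, Rinv_0_lt_compat. simpl; nra. }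
    split; [apply Rmax_r|]. apply Rmax_lub; nra.
Qed.

Lemma fold_theta_bounded (L N : nat) (bs : list bool) (x : state) (c : R) :
  0 < INR N -> (forall k, 0 <= x k <= c) ->
  forall k, 0 <= fold_left (fun y b => theta L N b y) bs x k
             <= c * (1 + / INR N) ^ length bs.
Proof.
  intros HN. revert x c.
  induction bs as [|b bs IH]; intros x c Hx k; simpl.
  - rewrite Rmult_1_r. apply Hx.
  - rewrite <- Rmult_assoc. apply IH. now apply theta_bounded.
Qed.

Lemma xi_path_bounded (L N : nat) (mu : R) (bs : list bool) :
  0 < INR N -> 0 <= mu ->
  forall k, 0 <= xi_path L N mu bs k <= mu * INR N * (1 + / INR N) ^ length bs.
Proof.
  intros HN Hmu. apply fold_theta_bounded; [exact HN|].
  intros k. unfold xi0. split; [nra | lra].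
Qed.

Lemma all_bits_length n bs : In bs (all_bits n) -> length bs = n.
Proof.
  revert bs. induction n as [|n IH]; simpl; intros bs Hbs.
  - now destruct Hbs as [<- | []].
  - apply in_app_or in Hbs.
    destruct Hbs as [Hbs | Hbs]; apply in_map_iff in Hbs;
      destruct Hbs as [bs' [<- Hbs']]; simpl; f_equal; auto.
Qed.

Lemma length_all_bits n : length (all_bits n) = (2 ^ n)%nat.
Proof.
  induction n as [|n IH]; [reflexivity|].
  simpl. rewrite length_app, !length_map, IH. lia.
Qed.

Lemma fold_right_Rplus_le (A : Type) (g : A -> R) (B : R) (l : list A) :
  (forall a, In a l -> g a <= B) ->
  fold_right Rplus 0 (map g l) <= INR (length l) * B.
Proof.
  induction l as [|a l IH]; intros Hg; cbn [map fold_right length]; [simpl; lra|].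
  rewrite S_INR.
  assert (g a <= B) by (apply Hg; now left).
  assert (fold_right Rplus 0 (map g l) <= INR (length l) * B)
    by (apply IH; intros; apply Hg; now right).
  lra.
Qed.

Lemma E_xi_le (L N : nat) (mu : R) (n : nat) (f : state -> R) (B : R) :
  (forall bs, length bs = n -> f (xi_path L N mu bs) <= B) ->
  E_xi L N mu n f <= B.
Proof.
  intros Hf. unfold E_xi.
  assert (H2n : 0 < 2 ^ n) by (apply pow_lt; lra).
  apply Rle_div_l; [exact H2n|].
  eapply Rle_trans.
  - apply fold_right_Rplus_le. intros bs Hbs. now apply Hf, all_bits_length.
  - rewrite length_all_bits, pow_INR. replace (INR 2) with 2 by (simpl; ring). lra.
Qed.

Lemma poisson_w_ge0 t n : 0 <= t -> 0 <= poisson_w t n.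
Proof.
  intros Ht. unfold poisson_w. apply Rmult_le_pos.
  - apply Rmult_le_pos; [apply Rlt_le, exp_pos | now apply pow_le].
  - apply Rlt_le, Rinv_0_lt_compat, INR_fact_lt_0.
Qed.

Lemma poisson_exp_moment_partial (t b : R) (M : nat) : 0 <= t ->
  sum_f_R0 (fun n => poisson_w t n * exp (b * INR n)) M <= exp (t * (exp b - 1)).
Proof.
  intros Ht.
  rewrite (sum_eq _ (fun n => (t * exp b) ^ n / INR (Factorial.fact n) * exp (- t))).
  2:{ intros n _. unfold poisson_w. rewrite Rpow_mult_distr, exp_pow_INR, (Rmult_comm (INR n)).
      field. apply INR_fact_neq_0. }
  rewrite <- scal_sum.
  replace (t * (exp b - 1)) with (- t + t * exp b) by ring.
  rewrite exp_plus. apply Rmult_le_compat_l; [apply Rlt_le, exp_pos|].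
  apply exp_ge_taylor. apply Rmult_le_pos; [exact Ht | apply Rlt_le, exp_pos].
Qed.

Lemma E_X_le_exp_moment (L N : nat) (mu t : R) (f : state -> R) (K b : R) :
  0 <= t -> 0 <= K ->
  (forall n, E_xi L N mu n f <= K * exp (b * INR n)) ->
  Rbar_le (E_X L N mu t f) (K * exp (t * (exp b - 1))).
Proof.
  intros Ht HK Hf. unfold E_X.
  rewrite <- Lim_seq_const. apply Lim_seq_le_loc. exists O. intros M _.
  apply Rle_trans with (sum_f_R0 (fun n => poisson_w t n * exp (b * INR n) * K) M).
  - apply sum_Rle. intros n _.
    rewrite Rmult_assoc, (Rmult_comm _ K).
    apply Rmult_le_compat_l; [now apply poisson_w_ge0 | apply Hf].
  - rewrite <- scal_sum. apply Rmult_le_compat_l; [exact HK|].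
    now apply poisson_exp_moment_partial.
Qed.

Lemma rpow_Ztilde_le (N : nat) (Z Y p r : R) :
  0 < INR N -> Z <= Y -> 0 <= p -> 0 < r ->
  rpow (Ztilde_of N Z) p <= Rpower (INR N) (- r) * Rpower Y (p + r).
Proof.
  intros HN HZY Hp Hr. unfold rpow, Ztilde_of.
  destruct (Rlt_dec 0 (Z - Rmin Z (INR N))) as [Hpos | _].
  2:{ apply Rlt_le, Rmult_lt_0_compat; apply Rpower_gt0. }
  destruct (Rle_dec Z (INR N)) as [Hle | Hgt].
  { rewrite Rmin_left in Hpos by exact Hle. lra. }
  rewrite Rmin_right in * by lra.
  apply Rle_trans with (Rpower Z p); [apply Rle_Rpower_l; lra|].
  replace p with ((p + r) + - r) at 1 by ring.
  rewrite Rpower_plus, Rmult_comm.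
  apply Rmult_le_compat; try apply Rlt_le, Rpower_gt0.
  - rewrite !Rpower_Ropp. apply Rinv_le_contravar; [apply Rpower_gt0|].
    apply Rle_Rpower_l; lra.
  - apply Rle_Rpower_l; lra.
Qed.

Lemma E_xi_Ztilde_pow_le (L N : nat) (mu p r : R) (n : nat) :
  0 < INR N -> 0 <= mu -> 0 <= p -> 0 < r ->
  E_xi L N mu n (fun x => rpow (Ztilde_of N (x O / INR N)) p)
  <= Rpower (INR N) (- r) * Rpower (mu + 1) (p + r) * exp ((p + r) / INR N * INR n).
Proof.
  intros HN Hmu Hp Hr. apply E_xi_le. intros bs Hlen.
  set (Y := (mu + 1) * exp (INR n / INR N)).
  assert (HZY : xi_path L N mu bs O / INR N <= Y).
  { apply Rle_div_l; [exact HN|].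
    pose proof (xi_path_bounded L N mu bs HN Hmu O) as [_ Hx].
    assert (Hgrowth : (1 + / INR N) ^ n <= exp (INR n / INR N)).
    { apply pow_1_plus_le_exp. pose proof (Rinv_0_lt_compat _ HN). lra. }
    assert (0 <= (1 + / INR N) ^ n).
    { apply pow_le. pose proof (Rinv_0_lt_compat _ HN). lra. }
    pose proof (exp_pos (INR n / INR N)).
    assert (0 <= mu * INR N) by nra.
    rewrite Hlen in Hx. unfold Y. nra. }
  apply Rle_trans with (Rpower (INR N) (- r) * Rpower Y (p + r));
    [now apply rpow_Ztilde_le|].
  rewrite Rmult_assoc. apply Rmult_le_compat_l; [apply Rlt_le, Rpower_gt0|].
  unfold Y. rewrite <- Rpower_mult_distr, Rpower_exp by (lra || apply exp_pos).
  right. f_equal. f_equal. field. lra.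
Qed.

Lemma poisson_exponent_le (N : nat) (s T a : R) :
  1 <= INR N -> 0 <= s <= T -> 0 <= a ->
  INR N * s * (exp (a / INR N) - 1) <= T * (a * exp a).
Proof.
  intros HN Hs Ha.
  set (b := a / INR N).
  assert (Hb : 0 <= b) by (unfold b; apply Rmult_le_pos; [lra | apply Rlt_le, Rinv_0_lt_compat; lra]).
  assert (Hba : b <= a).
  { unfold b. apply Rle_div_l; nra. }
  assert (HNb : INR N * b = a) by (unfold b; field; lra).
  pose proof (exp_sub1_le b Hb).
  pose proof (exp_le_compat b a Hba).
  pose proof (exp_pos b).
  apply Rle_trans with (s * a * exp b).
  - rewrite <- HNb. assert (0 <= INR N * s) by nra. nra.
  - rewrite <- Rmult_assoc. apply Rmult_le_compat; try nra.
Qed.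

Theorem lemma3p3 (tau mu T : R) (htau : 0 < tau) (hmu : 0 <= mu) (hT : 0 < T)
  (p q : R) (hp : 1 <= p) (hq : 1 <= q) :
  exists C : R, 0 < C /\
    forall (N : nat) (s : R), (1 <= N)%nat -> 0 <= s <= T ->
      Rbar_le (E_Ztilde_pow tau mu N s p) (Finite (C * Rpower (INR N) (- q / 2))).
Proof.
  set (a := p + q / 2).
  exists (Rpower (mu + 1) a * exp (T * (a * exp a))).
  split; [apply Rmult_lt_0_compat; [apply Rpower_gt0 | apply exp_pos]|].
  intros N s HN Hs.
  assert (HN1 : 1 <= INR N) by (apply le_INR in HN; exact HN).
  eapply Rbar_le_trans.
  - apply (E_X_le_exp_moment _ _ _ _ _ (Rpower (INR N) (- (q / 2)) * Rpower (mu + 1) a)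
             (a / INR N)); [nra | apply Rlt_le, Rmult_lt_0_compat; apply Rpower_gt0|].
    intros n. apply E_xi_Ztilde_pow_le; lra.
  - simpl. replace (- q / 2) with (- (q / 2)) by field.
    rewrite (Rmult_comm _ (Rpower (INR N) _)), Rmult_assoc.
    apply Rmult_le_compat_l; [apply Rlt_le, Rpower_gt0|].
    apply Rmult_le_compat_l; [apply Rlt_le, Rpower_gt0|].
    apply exp_le_compat. apply poisson_exponent_le; unfold a; lra.
Qed.
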